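(* If $r \geq 3$ and $t \geq 1$ are integers, then \[ \mathrm{ex}_r\bigl(n, \{C_2, C_3, K_{2,t+1}\}\bigr) \leq \frac{\sqrt{t}}{r(r-1)}\, n^{3/2} + \frac{n}{r}. \]
   Context: Let $G$ be a multigraph and $\mathcal{F}$ a hypergraph. $\mathcal{F}$ is a Berge-$G$ if there is a bijection $f: E(G) \to E(\mathcal{F})$ with $e \subseteq f(e)$ for every $e \in E(G)$. For a family $\mathcal{G}$ of multigraphs, a hypergraph $\mathcal{H}$ is $\mathcal{G}$-free if for every $G \in \mathcal{G}$, $\mathcal{H}$ contains no subhypergraph isomorphic to a Berge-$G$. $\mathrm{ex}_r(n,\mathcal{G})$ denotes the maximum number of edges in an $n$-vertex $r$-uniform $\mathcal{G}$-free hypergraph. $C_2$ is the multigraph consisting of two vertices joined by two parallel edges (so $C_2$-free means linear), $C_3$ is the triangle, and $K_{2,t+1}$ is the complete bipartite graph with parts of sizes $2$ and $t+1$. *)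

From HB Require Import structures.
From mathcomp Require Import all_boot all_order all_algebra.
Set Implicit Arguments. Unset Strict Implicit. Unset Printing Implicit Defensive.
Import Order.TTheory GRing.Theory Num.Theory.

Definition hypergraph (n : nat) := {set {set 'I_n}}.

Definition uniform (n r : nat) (H : hypergraph n) : Prop :=
  forall e, e \in H -> #|e| = r.

(* A (loopless) multigraph G is given by a finite vertex type V, a finite
   edge type E and an endpoint map ends : E -> V * V (parallel edges allowed). *)

(* H contains a subhypergraph isomorphic to a Berge-G: the vertices of G are
   mapped injectively to vertices of H (phi), and the edges of G are mapped
   injectively (f) to hyperedges of H so that each edge {u,v} of G is contained
   in its image, i.e. {phi u, phi v} \subset f e. *)
Definition contains_berge (n : nat) (H : hypergraph n)
    (V E : finType) (ends : E -> V * V) : Prop :=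
  exists (phi : V -> 'I_n) (f : E -> {set 'I_n}),
    [/\ injective phi, injective f,
        forall e, f e \in H &
        forall e, (phi (ends e).1 \in f e) && (phi (ends e).2 \in f e)].

Definition berge_free (n : nat) (H : hypergraph n)
    (V E : finType) (ends : E -> V * V) : Prop :=
  ~ contains_berge H ends.

Definition C2_ends : 'I_2 -> 'I_2 * 'I_2 := fun _ => (ord0, ord_max).

Definition C3_ends : 'I_3 -> 'I_3 * 'I_3 :=
  fun i => (i, inZp (i.+1)).

Definition K2_ends (s : nat) : 'I_2 * 'I_s -> ('I_2 + 'I_s) * ('I_2 + 'I_s) :=
  fun ab => (inl ab.1, inr ab.2).

(* Let x ~ u mean that x <> u lie in a common edge (the 2-shadow of H), and
   let d(x) be the shadow degree.  Linearity (no Berge-C2) makes the shadow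
   pairs of distinct edges disjoint, so r(r-1)|H| <= sum d(x).  In a linear
   Berge-C3-free hypergraph a vertex adjacent to two vertices of an edge lies
   in that edge; hence adjacent u, v have at most r - 2 common neighbours, and
   non-adjacent ones at most t since there is no Berge-K_{2,t+1}.  Counting
   paths of length two gives sum d(x)^2 <= (r-1) sum d(x) + t n^2, and
   Cauchy-Schwarz turns this into sum d(x) <= sqrt t n^{3/2} + (r-1) n. *)

From mathcomp Require Import all_boot all_order all_algebra.
From mathcomp Require Import zify ring lra.
Import Order.TTheory GRing.Theory Num.Theory.
Set Implicit Arguments. Unset Strict Implicit. Unset Printing Implicit Defensive.

Lemma card_sumE (T : finType) (A : {pred T}) : #|A| = \sum_x (x \in A).
Proof. by rewrite -sum1_card big_mkcond. Qed.

Lemma card_distinct_pairs (T : finType) (A : {set T}) :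
  #|A| * (#|A| - 1) = \sum_x \sum_y [&& x \in A, y \in A & x != y].
Proof.
rewrite {1}card_sumE big_distrl /=; apply: eq_bigr => x _.
have [xA | xA] := boolP (x \in A); last by rewrite big1.
rewrite mul1n (cardsD1 x A) xA add1n subn1 card_sumE.
by apply: eq_bigr => y _; rewrite !inE andbC eq_sym.
Qed.

Local Open Scope ring_scope.

Lemma sqr_sum_le (R : realFieldType) k (F : 'I_k -> R) :
  (\sum_i F i) ^+ 2 <= k%:R * \sum_i F i ^+ 2.
Proof.
set S := \sum_i F i; set Q := \sum_i F i ^+ 2.
have sum_sqr_diff i : \sum_j (F i - F j) ^+ 2 = k%:R * F i ^+ 2 - F i * S *+ 2 + Q.
  under eq_bigr => j _ do rewrite sqrrB.
  by rewrite !big_split /= sumrN sumr_const card_ord mulr_natl sumrMnl -mulr_sumr.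
have : 0 <= \sum_i \sum_j (F i - F j) ^+ 2 by do 2 apply: sumr_ge0 => ? _; apply: sqr_ge0.
rewrite (eq_bigr _ (fun i _ => sum_sqr_diff i)) !big_split /= sumrN sumr_const card_ord.
rewrite sumrMnl -mulr_sumr -mulr_suml -/S -/Q -mulr_natr mulr2n -[Q *+ k]mulr_natr.
nra.
Qed.

Lemma le_add_of_sqr_le (R : realFieldType) (x a b : R) :
  0 <= a -> 0 <= b -> x ^+ 2 <= b * x + a ^+ 2 -> x <= a + b.
Proof. by move=> a0 b0 sqr_x; rewrite leNgt; apply/negP => ab_x; nra. Qed.

Local Close Scope ring_scope.

Section ShadowGraph.

Variables (n : nat) (H : hypergraph n).

Definition adj (x u : 'I_n) : bool :=
  (x != u) && [exists e in H, (x \in e) && (u \in e)].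

Definition nbhd (x : 'I_n) : {set 'I_n} := [set u | adj x u].

Definition codeg (u v : 'I_n) : nat := #|nbhd u :&: nbhd v|.

Definition edge_of (x u : 'I_n) : {set 'I_n} :=
  odflt set0 [pick e in H | (x \in e) && (u \in e)].

Lemma adjC : symmetric adj.
Proof.
move=> x u; rewrite /adj eq_sym; congr andb.
by apply: eq_existsb => e; rewrite [(x \in e) && _]andbC.
Qed.

Lemma adj_neq x u : adj x u -> x != u.
Proof. by case/andP. Qed.

Lemma edge_adj e x u : e \in H -> x \in e -> u \in e -> x != u -> adj x u.
Proof. by move=> He xe ue xu; rewrite /adj xu; apply/exists_inP; exists e; rewrite ?xe. Qed.

Lemma edge_ofP x u :
  adj x u -> [/\ edge_of x u \in H, x \in edge_of x u & u \in edge_of x u].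
Proof.
case/andP=> _ /exists_inP[e He xue]; rewrite /edge_of.
case: pickP => [f /andP[Hf /andP[xf uf]] | none] //=.
by have := none e; rewrite He xue.
Qed.

Lemma card_nbhd x : #|nbhd x| = \sum_u adj x u.
Proof. by rewrite card_sumE; apply: eq_bigr => u _; rewrite inE. Qed.

Lemma sum_deg_pairs :
  \sum_x #|nbhd x| * (#|nbhd x| - 1) = \sum_u \sum_(v | u != v) codeg u v.
Proof.
under eq_bigr => x _ do rewrite card_distinct_pairs.
rewrite exchange_big; apply: eq_bigr => u _; rewrite exchange_big [RHS]big_mkcond.
apply: eq_bigr => v _; rewrite /codeg card_sumE.
case: (u != v); last by apply: big1 => x _; rewrite !andbF.
by apply: eq_bigr => x _; rewrite !inE andbT ![adj x _]adjC.
Qed.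

Lemma contains_berge_K2 s (u v : 'I_n) (w : 'I_s -> 'I_n) (e1 e2 : 'I_s -> {set 'I_n}) :
  u != v -> injective w -> (forall i, w i \notin [:: u; v]) ->
  injective e1 -> injective e2 -> (forall i j, e1 i != e2 j) ->
  (forall i, [&& e1 i \in H, u \in e1 i & w i \in e1 i]) ->
  (forall i, [&& e2 i \in H, v \in e2 i & w i \in e2 i]) ->
  contains_berge H (@K2_ends s).
Proof.
move=> uv w_inj w_uv e1_inj e2_inj e12 e1P e2P.
exists (fun z => match z with inl a => tnth [tuple u; v] a | inr i => w i end),
       (fun p => if p.1 == ord0 then e1 p.2 else e2 p.2).
split.
- have uv_inj : injective (tnth [tuple u; v]) by apply/tuple_uniqP; rewrite /= inE uv.
  move=> [a|i] [b|j] /= E.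
  + by rewrite (uv_inj _ _ E).
  + by have := w_uv j; rewrite -E mem_tnth.
  + by have := w_uv i; rewrite E mem_tnth.
  + by rewrite (w_inj _ _ E).
- move=> [a i] [b j]; case: a b => [[|[|?]] ?] [[|[|?]] ?] //= E.
  + by rewrite (e1_inj _ _ E); congr pair; apply: val_inj.
  + by have := e12 i j; rewrite E eqxx.
  + by have := e12 j i; rewrite E eqxx.
  + by rewrite (e2_inj _ _ E); congr pair; apply: val_inj.
- by move=> [[[|[|?]] ?] i] //=; [case/and3P: (e1P i) | case/and3P: (e2P i)].
- by move=> [[[|[|?]] ?] i] //=; [case/and3P: (e1P i) | case/and3P: (e2P i)] => _ -> ->.
Qed.

Hypothesis C2free : berge_free H C2_ends.

Lemma edge_linear a b e1 e2 : a != b -> e1 \in H -> e2 \in H ->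
  a \in e1 -> b \in e1 -> a \in e2 -> b \in e2 -> e1 = e2.
Proof.
move=> ab He1 He2 ae1 be1 ae2 be2; apply/eqP; apply: contraT => e12; exfalso.
apply: C2free; exists (tnth [tuple a; b]), (tnth [tuple e1; e2]); split.
- by apply/tuple_uniqP; rewrite /= inE ab.
- by apply/tuple_uniqP; rewrite /= inE e12.
- by move=> [[|[|?]] ?].
- by move=> [[|[|?]] ?] //=; rewrite ?ae1 ?be1 ?ae2 ?be2.
Qed.

Lemma sum_edges_through_le x u :
  \sum_(e in H) [&& x \in e, u \in e & x != u] <= adj x u.
Proof.
have [xu | nxu] := boolP (adj x u).
  apply: (@leq_trans #|[set e in H | (x \in e) && (u \in e)]|).
    rewrite card_sumE big_mkcond; apply: leq_sum => e _; rewrite !inE.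
    by case: (e \in H) (x \in e) (u \in e) => [] [] [] //=; apply: leq_b1.
  apply/card_le1_eqP => e1 e2; rewrite !inE => /and3P[He1 xe1 ue1] /and3P[He2 xe2 ue2].
  exact: edge_linear (adj_neq xu) He2 He1 xe2 ue2 xe1 ue1.
apply: (@leq_trans 0) => //; rewrite leqn0 sum_nat_eq0.
apply/forall_inP => e He; rewrite eqb0.
by apply: contra nxu => /and3P[xe ue xu]; apply: edge_adj He xe ue xu.
Qed.

Hypothesis C3free : berge_free H C3_ends.

Lemma triangle_edge a b c eab ebc eca :
  a != b -> b != c -> a != c -> eab \in H -> ebc \in H -> eca \in H ->
  a \in eab -> b \in eab -> b \in ebc -> c \in ebc -> c \in eca -> a \in eca ->
  [exists e in H, [&& a \in e, b \in e & c \in e]].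
Proof.
move=> ab bc ac Hab Hbc Hca a1 b1 b2 c2 c3 a3; apply: contraT => /exists_inPn none.
exfalso; apply: C3free; exists (tnth [tuple a; b; c]), (tnth [tuple eab; ebc; eca]).
split.
- by apply/tuple_uniqP; rewrite /= !inE negb_or ab ac bc.
- apply/tuple_uniqP; rewrite /= !inE negb_or andbT -andbA.
  apply/and3P; split; apply/eqP => E.
  + by have := none _ Hab; rewrite a1 b1 E c2.
  + by have := none _ Hab; rewrite a1 b1 E c3.
  + by have := none _ Hca; rewrite a3 c3 -E b2.
- by move=> [[|[|[|?]]] ?].
- by move=> [[|[|[|?]]] ?] //=; rewrite /tnth /= ?a1 ?b1 ?b2 ?c2 ?c3 ?a3.
Qed.

Lemma adj2_mem_edge e a b v : e \in H -> a != b -> a \in e -> b \in e ->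
  adj a v -> adj b v -> v \in e.
Proof.
move=> He ab ae be av bv.
have [Hea ea va] := edge_ofP av; have [Heb eb vb] := edge_ofP bv.
have /exists_inP[f Hf /and3P[af bf vf]] :=
  triangle_edge ab (adj_neq bv) (adj_neq av) He Heb Hea ae be eb vb va ea.
by rewrite -(edge_linear ab Hf He af bf ae be).
Qed.

Variables r t : nat.
Hypothesis unifH : uniform r H.

Lemma codeg_adj u v : adj u v -> codeg u v <= r - 2.
Proof.
move=> uv; have [Hh uh vh] := edge_ofP uv; set h := edge_of u v in Hh uh vh.
have vu : v != u by rewrite eq_sym (adj_neq uv).
have -> : r - 2 = #|h :\ u :\ v|.
  by rewrite -(unifH Hh) (cardsD1 u h) (cardsD1 v (h :\ u)) uh !inE vu vh /= !add1n subSS subn1.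
rewrite /codeg; apply/subset_leq_card/subsetP => x; rewrite !inE => /andP[ux vx].
rewrite (adj2_mem_edge Hh vu vh uh vx ux) andbT.
by rewrite ![x == _]eq_sym (adj_neq ux) (adj_neq vx).
Qed.

Lemma edge_of_inj u v x y : u != v -> ~~ adj u v ->
  x \in nbhd u :&: nbhd v -> y \in nbhd u :&: nbhd v ->
  edge_of u x = edge_of u y -> x = y.
Proof.
move=> uv nuv; rewrite !inE => /andP[ux vx] /andP[uy vy] E.
apply/eqP; apply: contraT => xy.
have [He ue xe] := edge_ofP ux; have [_ _ ye] := edge_ofP uy; rewrite -E in ye.
rewrite adjC in vx; rewrite adjC in vy.
have ve := adj2_mem_edge He xy xe ye vx vy.
by case/negP: nuv; apply: edge_adj He ue ve uv.
Qed.

Hypothesis K2free : berge_free H (@K2_ends t.+1).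

Lemma codeg_nadj (u v : 'I_n) : u != v -> ~~ adj u v -> codeg u v <= t.
Proof.
move=> uv nuv; rewrite leqNgt; apply/negP => lt_t; apply: K2free.
pose w i : 'I_n := enum_val (widen_ord lt_t i).
have w_inj : injective w by move=> i j /enum_val_inj /(congr1 val) /= /val_inj.
have wP i : w i \in nbhd u :&: nbhd v := enum_valP (widen_ord lt_t i).
have adj_w i : adj u (w i) && adj v (w i) by have := wP i; rewrite !inE.
apply: (contains_berge_K2 (w := w) (e1 := fun i => edge_of u (w i))
                                   (e2 := fun i => edge_of v (w i)) uv w_inj).
- move=> i; have /andP[/adj_neq uw /adj_neq vw] := adj_w i.
  by rewrite !inE negb_or ![w i == _]eq_sym uw vw.
- by move=> i j /(edge_of_inj uv nuv (wP i) (wP j)) /w_inj.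
- move=> i j; have := wP i; have := wP j; rewrite eq_sym in uv; rewrite adjC in nuv.
  by rewrite ![nbhd u :&: _]setIC => wj wi /(edge_of_inj uv nuv wi wj) /w_inj.
- move=> i j; apply/eqP => E.
  have /andP[/edge_ofP[He ue _] _] := adj_w i; have /andP[_ /edge_ofP[_ ve _]] := adj_w j.
  by rewrite -E in ve; case/negP: nuv; apply: edge_adj He ue ve uv.
- by move=> i; have /andP[/edge_ofP[-> -> ->] _] := adj_w i.
- by move=> i; have /andP[_ /edge_ofP[-> -> ->]] := adj_w i.
Qed.

Lemma codeg_le u v : u != v -> codeg u v <= (r - 2) * adj u v + t.
Proof.
move=> uv; have [uv_adj | uv_nadj] := boolP (adj u v).
  by rewrite muln1 (leq_trans (codeg_adj uv_adj)) ?leq_addr.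
by rewrite muln0 codeg_nadj.
Qed.

Lemma card_edges_le_sum_deg : #|H| * (r * (r - 1)) <= \sum_x #|nbhd x|.
Proof.
have -> : #|H| * (r * (r - 1)) = \sum_(e in H) \sum_x \sum_u [&& x \in e, u \in e & x != u].
  by rewrite -sum_nat_const; apply: eq_bigr => e He; rewrite -card_distinct_pairs (unifH He).
rewrite exchange_big; apply: leq_sum => x _; rewrite exchange_big card_nbhd.
by apply: leq_sum => u _; apply: sum_edges_through_le.
Qed.

Lemma sum_sqr_deg_le : 1 < r ->
  \sum_x #|nbhd x| ^ 2 <= (r - 1) * \sum_x #|nbhd x| + t * n ^ 2.
Proof.
move=> r_gt1.
have sqrE d : d ^ 2 = d * (d - 1) + d by case: d => // d; rewrite subSS subn0 -mulnSr.
rewrite (eq_bigr _ (fun x _ => sqrE _)) big_split /= sum_deg_pairs.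
have -> : r - 1 = (r - 2).+1 by lia.
rewrite mulSn addnC -addnA leq_add2l.
apply: (@leq_trans (\sum_u ((r - 2) * #|nbhd u| + t * n))); last first.
  by rewrite big_split /= -big_distrr sum_nat_const card_ord -mulnn mulnCA.
apply: leq_sum => u _; rewrite big_mkcond.
apply: (@leq_trans (\sum_v ((r - 2) * adj u v + t))).
  by apply: leq_sum => v _; case: ifP => // uv; apply: codeg_le.
by rewrite big_split /= -big_distrr -card_nbhd sum_nat_const card_ord mulnC.
Qed.

Local Open Scope ring_scope.

Lemma sum_deg_le (R : rcfType) : (1 < r)%N ->
  \sum_x (#|nbhd x|%:R : R) <=
    Num.sqrt t%:R * (n%:R * Num.sqrt n%:R) + n%:R * (r%:R - 1).
Proof.
move=> r_gt1; set S := \sum_x _.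
have sum_sqr_le : \sum_x (#|nbhd x|%:R : R) ^+ 2 <= (r%:R - 1) * S + t%:R * n%:R ^+ 2.
  have := sum_sqr_deg_le r_gt1.
  rewrite -(ler_nat R) natrD !natrM natrB ?(ltnW r_gt1) // !natr_sum expr2.
  by under eq_bigr do rewrite natrX.
apply: (le_add_of_sqr_le (R := R)).
- by rewrite !mulr_ge0 ?sqrtr_ge0.
- by rewrite mulr_ge0 // subr_ge0 ler1n ltnW.
rewrite !exprMn !sqr_sqrtr ?ler0n //.
apply: le_trans (sqr_sum_le _) _.
apply: le_trans (ler_wpM2l (ler0n _ n) sum_sqr_le) _.
lra.
Qed.

End ShadowGraph.

Local Open Scope ring_scope.

Theorem theorem2p1 (R : rcfType) (r t n : nat) :
  (3 <= r)%N -> (1 <= t)%N ->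
  forall H : hypergraph n,
    uniform r H ->
    berge_free H C2_ends -> berge_free H C3_ends -> berge_free H (@K2_ends t.+1) ->
    (#|H|%:R : R) <=
      Num.sqrt (t%:R) / (r%:R * (r%:R - 1)) * (n%:R * Num.sqrt (n%:R))
      + n%:R / r%:R.
Proof.
(* The argument does not need 1 <= t. *)
move=> r_ge3 _ H unifH C2free C3free K2free.
have r_gt1 : (1 < r)%N := ltnW r_ge3.
have r_gt1R : 1 < r%:R :> R by rewrite ltr1n.
have -> : Num.sqrt t%:R / (r%:R * (r%:R - 1)) * (n%:R * Num.sqrt n%:R) + n%:R / r%:R =
          (Num.sqrt t%:R * (n%:R * Num.sqrt n%:R) + n%:R * (r%:R - 1)) / (r%:R * (r%:R - 1)) :> R.
  by field; rewrite subr_eq0 !gt_eqF ?(lt_trans ltr01).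
rewrite ler_pdivlMr ?mulr_gt0 ?subr_gt0 ?(lt_trans ltr01) //.
apply: le_trans (sum_deg_le C2free C3free unifH K2free R r_gt1).
have := card_edges_le_sum_deg C2free unifH.
by rewrite -(ler_nat R) !natrM natrB ?natr_sum // ltnW.
Qed.
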